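(* Let $K$ be an algebraically closed field of characteristic zero, $\deg_1$ the standard homogeneous degree on $K[x_1,\dots,x_n]$, $\Phi=(f_1,\dots,f_n)$ a polynomial automorphism of $K^n$, $d_i=\deg_1(f_i)$, $\deg_2$ the weighted degree with weights $d_i$ on $x_i$, and $I=\{Q : Q(\overline{f_1},\dots,\overline{f_n})=0\}$. If $P\in K[x_1,\dots,x_n]$ satisfies $\deg_1(P\circ\Phi)=1$, then $\tilde P\in I$ unless $P$ is affine, i.e. $\deg_1(P)\le 1$.
   Context: $\overline{f}$ denotes the homogeneous component of highest degree of $f$, and $\tilde P$ denotes the leading term of $P$ with respect to $\deg_2$. *)

From mathcomp Require Import all_boot all_order all_algebra.
From mathcomp Require Import mpoly.
Set Implicit Arguments. Unset Strict Implicit. Unset Printing Implicit Defensive.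
Import GRing.Theory.
Local Open Scope ring_scope.

Definition wdeg (n : nat) (w : 'I_n -> nat) (m : 'X_{1..n}) : nat :=
  (\sum_(i < n) w i * m i)%N.

Definition wtop (R : ringType) (n : nat) (w : 'I_n -> nat) (p : {mpoly R[n]})
  : {mpoly R[n]} :=
  \sum_(m <- msupp p | wdeg w m == (\max_(m' <- msupp p) wdeg w m')%N)
     p@_m *: 'X_[m].

(* standard degree deg_1 (defined for nonzero p); msize p = deg_1 p + 1 *)
Definition deg1 (R : ringType) (n : nat) (p : {mpoly R[n]}) : nat := (msize p).-1.

Definition hbar (R : ringType) (n : nat) (p : {mpoly R[n]}) : {mpoly R[n]} :=
  wtop (fun _ => 1%N) p.

Definition poly_aut (R : ringType) (n : nat) (Phi : n.-tuple {mpoly R[n]}) : Prop :=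
  exists G : n.-tuple {mpoly R[n]},
    (forall i : 'I_n, tnth Phi i \mPo G = 'X_i) /\
    (forall i : 'I_n, tnth G i \mPo Phi = 'X_i).

Definition hbar_tuple (R : ringType) (n : nat) (Phi : n.-tuple {mpoly R[n]})
  : n.-tuple {mpoly R[n]} := [tuple hbar (tnth Phi i) | i < n].

Definition in_I (R : comRingType) (n : nat) (Phi : n.-tuple {mpoly R[n]})
  (Q : {mpoly R[n]}) : Prop := Q \mPo hbar_tuple Phi = 0.

Definition deg2_weights (R : ringType) (n : nat) (Phi : n.-tuple {mpoly R[n]})
  : 'I_n -> nat := fun i => deg1 (tnth Phi i).

From mathcomp Require Import all_boot all_order all_algebra.
From mathcomp Require Import mpoly.
From mathcomp Require Import ring zify.
Set Implicit Arguments. Unset Strict Implicit. Unset Printing Implicit Defensive.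
Import GRing.Theory.
Local Open Scope ring_scope.

(* Let D be the weighted degree deg_2 P.  Substituting f_i = overline f_i +
   (terms of degree < d_i) into a monomial of weighted degree D gives the
   corresponding monomial in the overline f_i plus terms of degree < D, while
   monomials of smaller weighted degree only produce terms of degree < D.
   Hence the degree-D homogeneous component of P o Phi is
   tilde P (overline f_1, ..., overline f_n).  The f_i are nonconstant, so all
   weights are positive and D >= deg_1 P >= 2 > deg_1 (P o Phi): that component
   vanishes. *)

Section HomogeneousTop.
Context (n : nat) (R : comNzRingType).
Implicit Types (p q h k : {mpoly R[n]}).

Lemma msize_dhomog_le d p : p \is d.-homog -> (msize p <= d.+1)%N.
Proof. by move/dhomogP=> hp; rewrite msizeE; apply/bigmax_leqP_seq => m /hp ->. Qed.

Lemma pihomog_eq0 d p : (msize p <= d)%N -> pihomog mdeg d p = 0.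
Proof.
move=> hp; rewrite pihomogE big_seq_cond big_pred0 // => m.
apply/negbTE/nandP.
have [/msize_mdeg_lt lt_m|] := boolP (m \in msupp p); last by left.
by right; apply: contraTneq (leq_trans lt_m hp) => ->; rewrite ltnn.
Qed.

Lemma msizeM_le_pred p q : (msize (p * q) <= (msize p + msize q).-1)%N.
Proof.
rewrite msizeE; apply/bigmax_leqP_seq => m /msuppM_le /allpairsP[[m1 m2] /= []].
move=> /msize_mdeg_lt lt1 /msize_mdeg_lt lt2 -> _; rewrite mdegD; lia.
Qed.

Definition dtop d p h := (h \is d.-homog) && (msize (p - h) <= d)%N.

Lemma dtop_msize d p h : dtop d p h -> (msize p <= d.+1)%N.
Proof.
case/andP=> /msize_dhomog_le hh hph; rewrite -(subrK h p).
by apply: leq_trans (msizeD_le _ _) _; rewrite geq_max hh andbT ltnW.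
Qed.

Lemma dtop_pihomog d p : (msize p <= d.+1)%N -> dtop d p (pihomog mdeg d p).
Proof.
move=> hp; rewrite /dtop pihomogP {1}(pihomog_partitionE hp) big_ord_recr /= addrK.
apply: leq_trans (msize_sum _ _ _) _; apply/bigmax_leqP => i _.
exact: leq_trans (msize_dhomog_le (pihomogP _ _ _)) _.
Qed.

Lemma pihomog_dtop d p h : dtop d p h -> pihomog mdeg d p = h.
Proof.
case/andP=> hh hph; rewrite -(subrK h p) pihomogD (pihomog_eq0 hph).
by rewrite add0r pihomog_dE.
Qed.

Lemma dtop1 : dtop 0 1 1.
Proof. by rewrite /dtop dhomog1 subrr msize0. Qed.

Lemma dtopM a b p q h k :
  dtop a p h -> dtop b q k -> dtop (a + b) (p * q) (h * k).
Proof.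
move=> tp tq; have size_q := dtop_msize tq.
case/andP: tp => hh hph; case/andP: tq => hk hqk.
have size_h := msize_dhomog_le hh.
rewrite /dtop dhomogM //=.
have -> : p * q - h * k = (p - h) * q + h * (q - k) by ring.
apply: leq_trans (msizeD_le _ _) _; rewrite geq_max.
by apply/andP; split; apply: leq_trans (msizeM_le_pred _ _) _; lia.
Qed.

Lemma dtopX d p h e : dtop d p h -> dtop (d * e) (p ^+ e) (h ^+ e).
Proof.
move=> tp; elim: e => [|e IH]; first by rewrite muln0 !expr0 dtop1.
by rewrite !exprS mulnS dtopM.
Qed.

Lemma dtop_monomial (w : 'I_n -> nat) (F G : 'I_n -> {mpoly R[n]}) m :
  (forall i, dtop (w i) (F i) (G i)) ->
  dtop (wdeg w m) (\prod_i F i ^+ m i) (\prod_i G i ^+ m i).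
Proof.
move=> tF; apply: (big_ind3 (fun d p h => dtop d p h)) => [|*|i _].
- exact: dtop1.
- exact: dtopM.
- exact: dtopX.
Qed.

End HomogeneousTop.

Definition wdegree (R : nzRingType) n (w : 'I_n -> nat) (p : {mpoly R[n]}) : nat :=
  (\max_(m <- msupp p) wdeg w m)%N.

Lemma wdeg1 n (m : 'X_{1..n}) : wdeg (fun _ => 1%N) m = mdeg m.
Proof. by rewrite mdegE; apply: eq_bigr => i _; rewrite mul1n. Qed.

Lemma mdeg_le_wdeg n (w : 'I_n -> nat) (m : 'X_{1..n}) :
  (forall i, 0 < w i)%N -> (mdeg m <= wdeg w m)%N.
Proof. by move=> w_gt0; rewrite mdegE; apply: leq_sum => i _; apply: leq_pmull. Qed.

Lemma msize_le_wdegree (R : nzRingType) n (w : 'I_n -> nat) (p : {mpoly R[n]}) :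
  (forall i, 0 < w i)%N -> (msize p <= (wdegree w p).+1)%N.
Proof.
move=> w_gt0; rewrite msizeE; apply/bigmax_leqP_seq => m hm _.
by rewrite ltnS (leq_trans (mdeg_le_wdeg _ w_gt0)) ?(leq_bigmax_seq _ hm).
Qed.

Lemma hbarE (R : nzRingType) n (p : {mpoly R[n]}) :
  hbar p = pihomog mdeg (msize p).-1 p.
Proof.
have predn_max : {morph predn : a b / maxn a b}.
  by move=> a b /=; lia.
rewrite /hbar /wtop pihomogE msizeE.
rewrite (big_morph _ predn_max (erefl 0%N : 0.-1 = 0%N)) /=.
by apply: eq_bigl => m; rewrite wdeg1 (eq_bigr _ (fun m _ => wdeg1 m)).
Qed.

Lemma pihomog_comp_wtop (R : comNzRingType) n (w : 'I_n -> nat)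
    (Phi T : n.-tuple {mpoly R[n]}) (P : {mpoly R[n]}) :
  (forall i, dtop (w i) (tnth Phi i) (tnth T i)) ->
  pihomog mdeg (wdegree w P) (P \mPo Phi) = wtop w P \mPo T.
Proof.
move=> tops; rewrite comp_mpolyEX raddf_sum /wtop -/(wdegree w P) raddf_sum /=.
rewrite [RHS]big_mkcond !big_seq; apply: eq_bigr => m hm.
have tm := dtop_monomial m (fun i => tops i).
rewrite linearZ /= comp_mpolyX; case: eqVneq => [<-|ne].
  by rewrite comp_mpolyZ comp_mpolyX (pihomog_dtop tm).
rewrite pihomog_eq0 ?scaler0 // (leq_trans (dtop_msize tm)) // ltn_neqAle ne.
exact: leq_bigmax_seq hm _.
Qed.

Lemma poly_aut_deg1_gt0 (R : comNzRingType) n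
    (Phi : n.-tuple {mpoly R[n]}) i :
  poly_aut Phi -> (0 < deg1 (tnth Phi i))%N.
Proof.
case=> G [PhiG _]; rewrite /deg1 -subn1 subn_gt0 ltnNge.
apply/negP => /msize1_polyC cst; have := congr1 (fun p => msize p) (PhiG i).
by rewrite cst comp_mpolyC msizeC msizeX mdeg1; case: (_ != 0).
Qed.

Theorem corollary3 (K : closedFieldType) (n : nat)
  (Phi : n.-tuple {mpoly K[n]}) (P : {mpoly K[n]}) :
  [pchar K] =i pred0 ->
  poly_aut Phi ->
  msize (P \mPo Phi) = 2%N ->
  ~ (msize P <= 2)%N ->
  in_I Phi (wtop (deg2_weights Phi) P).
Proof.
move=> _ autPhi deg_PPhi /negP; rewrite -ltnNge => nonaffine_P.
set w := deg2_weights Phi.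
have w_gt0 i : (0 < w i)%N by apply: poly_aut_deg1_gt0.
have tops i : dtop (w i) (tnth Phi i) (tnth (hbar_tuple Phi) i).
  by rewrite tnth_mktuple hbarE; apply/dtop_pihomog/leqSpred.
rewrite /in_I -(pihomog_comp_wtop P tops) pihomog_eq0 // deg_PPhi.
by have := leq_trans nonaffine_P (msize_le_wdegree P w_gt0).
Qed.
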